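(* Let $N=2^n$ and $i,j\in[0,N)$ with $i<j$. Then every $\mathbf{x}\in C^{(n)}(i,j):=\mathbf{g}_i+\mathbf{g}_j+\langle\mathbf{g}_{j+1},\ldots,\mathbf{g}_{N-1}\rangle$ satisfies $\mathrm{w}(\mathbf{x})\ge\mathrm{w}(\mathbf{g}_i+\mathbf{g}_j)$, and $$\mathrm{w}(\mathbf{g}_i+\mathbf{g}_j)=\mathrm{w}(\mathbf{g}_i)+\mathrm{w}(\mathbf{g}_j)-2^{t_{i,j}+1},\qquad t_{i,j}:=\sum_{k=0}^{n-1}b_k(i)b_k(j).$$
   Context: All vectors are binary (over $GF(2)$), indices are zero-based, $\mathrm{w}(\cdot)$ is Hamming weight and $\langle\cdot\rangle$ denotes linear span over $GF(2)$. Let $G_N=\begin{pmatrix}1&0\\1&1\end{pmatrix}^{\otimes n}$ for $N=2^n$, with rows $\mathbf{g}_0,\ldots,\mathbf{g}_{N-1}$. For $k\in[0,N)$, $b_r(k)$ denotes the $r$-th bit of $k$, i.e. $k=\sum_{r=0}^{n-1}b_r(k)2^r$. *)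

From mathcomp Require Import all_boot all_order all_algebra.
Set Implicit Arguments. Unset Strict Implicit. Unset Printing Implicit Defensive.
Import GRing.Theory.
Local Open Scope ring_scope.

Definition bit (r k : nat) : bool := odd (k %/ 2 ^ r).

Definition polarK : 'M['F_2]_2 := \matrix_(a < 2, b < 2) (if (b <= a)%N then 1 else 0).

(* G_N = polarK^{\otimes n}, N = 2^n: by the entry formula of the iterated
   Kronecker product, entry (i,c) is the product over bit positions r of
   polarK (b_r(i)) (b_r(c)). *)
Definition polarG (n : nat) : 'M['F_2]_(2 ^ n) :=
  \matrix_(i < 2 ^ n, c < 2 ^ n)
    \prod_(r < n) polarK (inord (bit r i)) (inord (bit r c)).

Definition grow (n : nat) (i : 'I_(2 ^ n)) : 'rV['F_2]_(2 ^ n) := row i (polarG n).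

Definition wt (m : nat) (x : 'rV['F_2]_m) : nat := #|[set c : 'I_m | x 0 c != 0]|.

Definition tij (n i j : nat) : nat := (\sum_(k < n) (bit k i && bit k j : nat))%N.

(* Row g_k of G_N is the indicator of the bit-submasks c of k, so w(g_k) = 2^(t_kk) and g_i, g_j
   overlap in the 2^(t_ij) common submasks of i and j; this is the weight formula.
   Splitting the coordinates by their top bit, G_2N = [[G_N, 0], [G_N, G_N]], so the codeword with
   coefficient set K is (u + v | v), u and v being the codewords of the lower and upper half of K.
   Induction on n along this decomposition proves, for a codeword x whose two smallest indices are
   i < j: w(x) >= w(g_i) + w(g_j) - 2^(t_ij + 1). When i and j fall in different halves this needs
   w(x outside g_m) >= w(g_j) - w(g_j /\ g_m) for x with smallest index j, which in turn needs
   w(x) >= w(g_j). *)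

From mathcomp Require Import all_boot all_order all_algebra.
From mathcomp Require Import zify.
Import GRing.Theory.
Set Implicit Arguments.
Unset Strict Implicit.

Lemma bit_small n k : k < 2 ^ n -> bit n k = false.
Proof. by move=> lt_k; rewrite /bit divn_small. Qed.

Lemma bit_addn_low r n k : r < n -> bit r (k + 2 ^ n) = bit r k.
Proof.
move=> lt_rn; rewrite /bit divnDr ?dvdn_exp2l ?(ltnW lt_rn) //.
by rewrite -expnB ?(ltnW lt_rn) // oddD oddX subn_eq0 leqNgt lt_rn addbF.
Qed.

Lemma bit_addn_top n k : k < 2 ^ n -> bit n (k + 2 ^ n) = true.
Proof. by move=> lt_k; rewrite /bit divnDr // divnn expn_gt0 /= divn_small. Qed.

Lemma ltn_exp2S_split n k : k < 2 ^ n.+1 ->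
  k < 2 ^ n \/ exists2 k', k' < 2 ^ n & k = k' + 2 ^ n.
Proof.
case: (ltnP k (2 ^ n)) => [|le_k lt_k]; first by left.
by right; exists (k - 2 ^ n); [move: lt_k; rewrite expnS; lia | lia].
Qed.

Lemma tijS n a b : tij n.+1 a b = tij n a b + (bit n a && bit n b).
Proof. by rewrite /tij big_ord_recr. Qed.

Lemma tij_addnl n a b : tij n (a + 2 ^ n) b = tij n a b.
Proof. by apply: eq_bigr => r _; rewrite bit_addn_low. Qed.

Lemma tij_addnr n a b : tij n a (b + 2 ^ n) = tij n a b.
Proof. by apply: eq_bigr => r _; rewrite bit_addn_low. Qed.

Definition submask n c k := \big[andb/true]_(r < n) (bit r c ==> bit r k).

Lemma submaskS n c k : submask n.+1 c k = submask n c k && (bit n c ==> bit n k).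
Proof. by rewrite /submask big_ord_recr. Qed.

Lemma submask_addnl n c k : submask n (c + 2 ^ n) k = submask n c k.
Proof. by apply: eq_bigr => r _; rewrite bit_addn_low. Qed.

Lemma submask_addnr n c k : submask n c (k + 2 ^ n) = submask n c k.
Proof. by apply: eq_bigr => r _; rewrite bit_addn_low. Qed.

Lemma submaskS_low n c k : c < 2 ^ n -> submask n.+1 c k = submask n c k.
Proof. by move=> lt_c; rewrite submaskS bit_small // andbT. Qed.

Lemma submaskS_high n c k :
  c < 2 ^ n -> submask n.+1 (c + 2 ^ n) k = submask n c k && bit n k.
Proof. by move=> lt_c; rewrite submaskS submask_addnl bit_addn_top. Qed.

Lemma big_nat_exp2S n (F : nat -> nat) :
  \sum_(0 <= k < 2 ^ n.+1) F k = \sum_(0 <= k < 2 ^ n) F k + \sum_(0 <= k < 2 ^ n) F (k + 2 ^ n).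
Proof.
rewrite (@big_cat_nat _ _ _ (2 ^ n)) //= ?leq_exp2l //.
by rewrite -{2}[2 ^ n]add0n big_addn expnS mul2n -addnn addnK.
Qed.

Definition weight n (f : nat -> bool) := \sum_(0 <= c < 2 ^ n) f c.

Lemma weightS n f : weight n.+1 f = weight n f + weight n (fun c => f (c + 2 ^ n)).
Proof. exact: big_nat_exp2S. Qed.

Lemma eq_weight n f g : (forall c, c < 2 ^ n -> f c = g c) -> weight n f = weight n g.
Proof. by move=> eq_fg; apply: eq_big_nat => c /andP[_ /eq_fg ->]. Qed.

Lemma leq_weight n (f g : nat -> bool) : (forall c, f c ==> g c) -> weight n f <= weight n g.
Proof. by move=> le_fg; apply: leq_sum => c _; case: (f c) (le_fg c) => //= ->. Qed.

Lemma weight0 n : weight n (fun _ => false) = 0.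
Proof. exact: big1. Qed.

Lemma weight_addb_le n f g : weight n f <= weight n (fun c => f c (+) g c) + weight n g.
Proof. by rewrite /weight -big_split; apply: leq_sum => c _; case: (f c); case: (g c). Qed.

Lemma weight_addb_le_out n f g s :
  weight n (fun c => ~~ s c && f c) <=
  weight n (fun c => ~~ s c && (f c (+) g c)) + weight n (fun c => ~~ s c && g c).
Proof.
by rewrite /weight -big_split; apply: leq_sum => c _; case: (f c); case: (g c); case: (s c).
Qed.

Lemma weight_addb n f g :
  weight n (fun c => f c (+) g c) + 2 * weight n (fun c => f c && g c) = weight n f + weight n g.
Proof.
by rewrite /weight big_distrr -!big_split; apply: eq_bigr => c _; case: (f c); case: (g c).
Qed.

Lemma weight_addb_diff n f g :
  weight n (fun c => f c (+) g c) + weight n g = weight n f + 2 * weight n (fun c => ~~ f c && g c).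
Proof.
by rewrite /weight big_distrr -!big_split; apply: eq_bigr => c _; case: (f c); case: (g c).
Qed.

Lemma weight_submask2 n i j :
  weight n (fun c => submask n c i && submask n c j) = 2 ^ tij n i j.
Proof.
elim: n i j => [|n IHn] i j; first by rewrite /weight /tij /submask big_nat1 !big_ord0.
have low : weight n (fun c => submask n.+1 c i && submask n.+1 c j) = 2 ^ tij n i j.
  by rewrite -IHn; apply: eq_weight => c lt_c; rewrite !submaskS_low.
have high : weight n (fun c => submask n.+1 (c + 2 ^ n) i && submask n.+1 (c + 2 ^ n) j)
          = weight n (fun c => (bit n i && bit n j) && (submask n c i && submask n c j)).
  apply: eq_weight => c lt_c; rewrite !submaskS_high //.
  by case: (bit n i); case: (bit n j); rewrite ?andbT ?andbF.
rewrite weightS low high tijS; case: (bit n i && bit n j) => /=.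
  by rewrite IHn addn1 expnS; lia.
by rewrite weight0 !addn0.
Qed.

Lemma weight_submask n k : weight n (submask n ^~ k) = 2 ^ tij n k k.
Proof. by rewrite -weight_submask2; apply: eq_weight => c _; rewrite andbb. Qed.

(* Coordinate c of the codeword \sum_(k in K) g_k, as g_k(c) = [submask n c k] (polarG_entry). *)
Definition encode n (K : nat -> bool) c :=
  odd (\sum_(0 <= k < 2 ^ n) (K k && submask n c k)).

Definition upper n (K : nat -> bool) k := K (k + 2 ^ n).

Lemma encodeS_low n K c :
  c < 2 ^ n -> encode n.+1 K c = encode n K c (+) encode n (upper n K) c.
Proof.
move=> lt_c; rewrite /encode big_nat_exp2S oddD.
by congr (odd _ (+) odd _); apply: eq_bigr => k _; rewrite submaskS_low ?submask_addnr.
Qed.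

Lemma encodeS_high n K c :
  c < 2 ^ n -> encode n.+1 K (c + 2 ^ n) = encode n (upper n K) c.
Proof.
move=> lt_c; rewrite /encode big_nat_exp2S big_nat_cond.
rewrite big1 ?add0n => [|k /andP[/andP[_ lt_k] _]].
  congr (odd _); apply: eq_big_nat => k /andP[_ lt_k].
  by rewrite submaskS_high // submask_addnr bit_addn_top ?andbT.
by rewrite submaskS_high // bit_small // !andbF.
Qed.

Lemma encode_eq0 n (K : nat -> bool) c :
  (forall k, k < 2 ^ n -> ~~ K k) -> encode n K c = false.
Proof. by move=> K0; rewrite /encode big_nat big1 // => k /K0 /negbTE ->. Qed.

Lemma encode_pred1 n (K : nat -> bool) i c :
  i < 2 ^ n -> K i -> (forall k, k < 2 ^ n -> k != i -> ~~ K k) -> encode n K c = submask n c i.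
Proof.
move=> lt_i Ki K1; rewrite /encode (bigD1_seq i) ?mem_index_iota ?iota_uniq //= big_seq_cond.
rewrite big1 => [|k /andP[]]; first by rewrite Ki addn0 oddb.
by rewrite mem_index_iota => /andP[_ lt_k] ne_ki; rewrite (negbTE (K1 k lt_k ne_ki)).
Qed.

Lemma weight_encodeS n (K : nat -> bool) : weight n.+1 (encode n.+1 K) =
  weight n (fun c => encode n K c (+) encode n (upper n K) c) + weight n (encode n (upper n K)).
Proof.
rewrite weightS; congr (_ + _); apply: eq_weight => c lt_c.
  exact: encodeS_low.
exact: encodeS_high.
Qed.

Lemma weight_encodeS_out n (K : nat -> bool) m :
  weight n.+1 (fun c => ~~ submask n.+1 c m && encode n.+1 K c) =
    weight n (fun c => ~~ submask n c m && (encode n K c (+) encode n (upper n K) c))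
  + weight n (fun c => ~~ (bit n m && submask n c m) && encode n (upper n K) c).
Proof.
rewrite weightS; congr (_ + _); apply: eq_weight => c lt_c.
  by rewrite encodeS_low // submaskS_low.
by rewrite encodeS_high // submaskS_high // (andbC (submask n c m)).
Qed.

Lemma weight_encode_ge n (K : nat -> bool) j :
  j < 2 ^ n -> K j -> (forall k, k < j -> ~~ K k) -> 2 ^ tij n j j <= weight n (encode n K).
Proof.
elim: n K j => [|n IHn] K j lt_j Kj K_min.
  move: lt_j; rewrite expn0 ltnS leqn0 => /eqP j0; subst j.
  by rewrite /weight /encode /tij /submask !big_nat1 !big_ord0 Kj.
rewrite weight_encodeS; case/ltn_exp2S_split: lt_j Kj K_min => [lt_j | [j' lt_j' ->]] Kj K_min.
  rewrite tijS bit_small // addn0.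
  exact: leq_trans (IHn K j lt_j Kj K_min) (weight_addb_le _ _ _).
have K_low c : encode n K c = false.
  apply: encode_eq0 => k' lt_k'; apply: K_min; lia.
rewrite (@eq_weight _ _ (encode n (upper n K))) => [|c _]; last by rewrite K_low.
have upper_min k : k < j' -> ~~ upper n K k by move=> lt_k; apply: K_min; lia.
have := IHn (upper n K) j' lt_j' Kj upper_min.
by rewrite tijS tij_addnl tij_addnr bit_addn_top // addn1 expnS; lia.
Qed.

Lemma weight_encode_out_ge n (K : nat -> bool) j m :
  j < 2 ^ n -> K j -> (forall k, k < j -> ~~ K k) ->
  2 ^ tij n j j <= weight n (fun c => ~~ submask n c m && encode n K c) + 2 ^ tij n m j.
Proof.
elim: n K j => [|n IHn] K j lt_j Kj K_min; first by rewrite /tij !big_ord0 leq_addl.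
rewrite weight_encodeS_out !tijS.
case/ltn_exp2S_split: lt_j Kj K_min => [lt_j | [j' lt_j' ->]] Kj K_min.
  rewrite bit_small // !andbF !addn0.
  have le_out := weight_addb_le_out n (encode n K) (encode n (upper n K)) (submask n ^~ m).
  have le_mask : weight n (fun c => ~~ submask n c m && encode n (upper n K) c) <=
                 weight n (fun c => ~~ (bit n m && submask n c m) && encode n (upper n K) c).
    by apply: leq_weight => c; case: (encode _ _ c); case: (submask n c m); case: (bit n m).
  have := IHn K j lt_j Kj K_min; lia.
have K_low c : encode n K c = false.
  by apply: encode_eq0 => k lt_k; apply: K_min; lia.
have upper_min k : k < j' -> ~~ upper n K k by move=> lt_k; apply: K_min; lia.
under eq_weight => c _ do rewrite K_low.
have := IHn (upper n K) j' lt_j' Kj upper_min.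
rewrite tij_addnl !tij_addnr bit_addn_top //.
case: (bit n m) => /=; first by rewrite !addn1 !expnS; lia.
have : 2 ^ tij n j' j' <= weight n (fun c => encode n (upper n K) c).
  exact: weight_encode_ge lt_j' Kj upper_min.
by rewrite addn1 addn0 expnS; lia.
Qed.

Lemma weight_addb_submask_ge n (K : nat -> bool) i j :
  j < 2 ^ n -> K j -> (forall k, k < j -> ~~ K k) ->
  2 ^ tij n i i + 2 * 2 ^ tij n j j <=
  weight n (fun c => submask n c i (+) encode n K c) + weight n (encode n K) + 2 * 2 ^ tij n i j.
Proof.
move=> lt_j Kj K_min; have := weight_encode_out_ge i lt_j Kj K_min.
by rewrite -(weight_submask n i) weight_addb_diff; lia.
Qed.

Lemma weight_encode_pair_ge n (K : nat -> bool) i j :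
  i < j -> j < 2 ^ n -> K i -> K j -> (forall k, k < j -> k != i -> ~~ K k) ->
  2 ^ tij n i i + 2 ^ tij n j j <= weight n (encode n K) + 2 ^ (tij n i j).+1.
Proof.
elim: n K i j => [|n IHn] K i j lt_ij lt_j Ki Kj K_min; first by move: lt_j; rewrite expn0; lia.
rewrite weight_encodeS.
case/ltn_exp2S_split: lt_j lt_ij Kj K_min => [lt_j | [j' lt_j' ->]] lt_ij Kj K_min.
  have lt_i : i < 2 ^ n by lia.
  rewrite !tijS !(bit_small lt_i) !(bit_small lt_j) !addn0.
  have := weight_addb_le n (encode n K) (encode n (upper n K)).
  have := IHn K i j lt_ij lt_j Ki Kj K_min; lia.
have upper_min k : k < j' -> k + 2 ^ n != i -> ~~ upper n K k.
  by move=> lt_k ne_ki; apply: K_min; first lia.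
rewrite !tijS !tij_addnr !tij_addnl bit_addn_top //.
have lt_i : i < 2 ^ n.+1 by rewrite expnS; lia.
case/ltn_exp2S_split: lt_i Ki lt_ij upper_min K_min
  => [lt_i | [i' lt_i' ->]] Ki lt_ij upper_min K_min.
  have K_low c : encode n K c = submask n c i.
    by apply: encode_pred1 => // k lt_k; apply: K_min; lia.
  under eq_weight => c _ do rewrite K_low.
  have upper_min' k : k < j' -> ~~ upper n K k by move=> lt_k; apply: upper_min; lia.
  have := weight_addb_submask_ge i lt_j' Kj upper_min'.
  by rewrite bit_small //= !addn0 addn1 !expnS; lia.
have K_low c : encode n K c = false.
  by apply: encode_eq0 => k lt_k; apply: K_min; lia.
rewrite (@eq_weight n _ (encode n (upper n K))) => [|c _]; last by rewrite K_low.
have lt_ij' : i' < j' by lia.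
have upper_min' k : k < j' -> k != i' -> ~~ upper n K k.
  by move=> lt_k ne_ki; apply: upper_min => //; apply: contra ne_ki => /eqP ?; apply/eqP; lia.
have := IHn (upper n K) i' j' lt_ij' lt_j' Ki Kj upper_min'.
by rewrite !tij_addnl !tij_addnr bit_addn_top //= !addn1 !expnS; lia.
Qed.

Local Open Scope ring_scope.

Lemma natr_odd_F2 m : ((odd m)%:R : 'F_2) = m%:R.
Proof. by rewrite -modn2 Fp_nat_mod. Qed.

Lemma natr_addb_F2 (x y : bool) : ((x (+) y : nat)%:R : 'F_2) = x%:R + y%:R.
Proof. by rewrite -natrD -[RHS]natr_odd_F2 oddD !oddb. Qed.

Lemma natr_bool_F2_eq0 (b : bool) : ((b%:R : 'F_2) == 0) = ~~ b.
Proof. by case: b; rewrite ?oner_eq0 ?eqxx. Qed.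

Lemma F2_natr_neq0 (y : 'F_2) : y = (y != 0)%:R.
Proof. by case: y => [[|[|m]] //= lt_y]; apply: val_inj. Qed.

Lemma natr_big_andb (R : pzSemiRingType) m (b : nat -> bool) :
  ((\big[andb/true]_(r < m) b r : nat)%:R : R) = \prod_(r < m) (b r : nat)%:R.
Proof.
by apply: (big_morph (fun x : bool => (x : nat)%:R : R)) => [[] []|] /=;
  rewrite ?mul1r ?mul0r.
Qed.

Lemma polarG_entry n (k c : 'I_(2 ^ n)) : polarG n k c = (submask n c k)%:R.
Proof.
rewrite mxE /submask (@natr_big_andb _ n (fun r => bit r c ==> bit r k)).
apply: eq_bigr => r _.
by rewrite mxE !inordK ?ltnS ?leq_b1 //; case: (bit r k); case: (bit r c).
Qed.

Lemma grow_entry n (k c : 'I_(2 ^ n)) : grow k 0 c = (submask n c k)%:R.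
Proof. by rewrite mxE polarG_entry. Qed.

Lemma wt_natr n (x : 'rV['F_2]_(2 ^ n)) (f : nat -> bool) :
  (forall c : 'I_(2 ^ n), x 0 c = (f c)%:R) -> wt x = weight n f.
Proof.
move=> xE; rewrite /wt -sum1_card big_mkcond /weight big_mkord; apply: eq_bigr => c _.
by rewrite in_set xE natr_bool_F2_eq0 negbK; case: (f c).
Qed.

Definition coef_support n (b : 'I_(2 ^ n) -> 'F_2) (k : nat) : bool :=
  if insub k is Some o then b o != 0 else false.

Lemma coef_supportE n b (k : 'I_(2 ^ n)) : coef_support b k = (b k != 0).
Proof. by rewrite /coef_support valK. Qed.

Lemma sum_scale_grow_entry n (b : 'I_(2 ^ n) -> 'F_2) c :
  (\sum_(k < 2 ^ n) b k *: grow k) 0 c = (encode n (coef_support b) c)%:R.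
Proof.
rewrite summxE natr_odd_F2 natr_sum big_mkord; apply: eq_bigr => k _.
rewrite mxE grow_entry coef_supportE [b k]F2_natr_neq0 -natrM.
by case: (b k != 0); case: (submask n c k).
Qed.

Lemma sum_scale_pair (R : pzRingType) (V : lmodType R) m (v : 'I_m -> V) (i j : 'I_m)
    (a : 'I_m -> R) :
  v i + v j + \sum_(k < m | (j < k)%N) a k *: v k =
  \sum_(k < m) (((k == i) + (k == j))%:R + (j < k)%:R * a k) *: v k.
Proof.
under [RHS]eq_bigr do rewrite scalerDl natrD scalerDl.
rewrite !big_split /= big_mkcond /=.
congr (_ + _ + _); last by apply: eq_bigr => k _; case: (j < k)%N; rewrite ?mul1r ?mul0r ?scale0r.
  by rewrite (bigD1 i) //= eqxx scale1r big1 ?addr0 // => k /negbTE ->; rewrite scale0r.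
by rewrite (bigD1 j) //= eqxx scale1r big1 ?addr0 // => k /negbTE ->; rewrite scale0r.
Qed.

Lemma coef_support_coset n (i j : 'I_(2 ^ n)) (a : 'I_(2 ^ n) -> 'F_2) k :
  (i < j)%N -> (k <= j)%N ->
  coef_support (fun l => ((l == i) + (l == j))%:R + (j < l)%:R * a l) k = (k == i) || (k == j).
Proof.
move=> lt_ij le_kj; have lt_k : (k < 2 ^ n)%N := leq_ltn_trans le_kj (ltn_ord j).
rewrite -[k]/(val (Ordinal lt_k)) coef_supportE ltnNge le_kj mul0r addr0 /=.
rewrite -[Ordinal lt_k == i]/(k == i) -[Ordinal lt_k == j]/(k == j).
case: (k =P i) => [-> | _]; first by rewrite ltn_eqF.
by case: (k =P j).
Qed.

Theorem theorem5 (n : nat) (i j : 'I_(2 ^ n)) (hij : (i < j)%N) :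
  (forall a : 'I_(2 ^ n) -> 'F_2,
     (wt (grow i + grow j) <=
      wt (grow i + grow j + \sum_(k < 2 ^ n | (j < k)%N) a k *: grow k))%N)
  /\ (wt (grow i + grow j) + 2 ^ (tij n i j).+1 = wt (grow i) + wt (grow j))%N.
Proof.
have wt_grow (k : 'I_(2 ^ n)) : wt (grow k) = (2 ^ tij n k k)%N.
  by rewrite -weight_submask; apply: wt_natr => c; rewrite grow_entry.
have wt_pair : (wt (grow i + grow j) + 2 ^ (tij n i j).+1 = wt (grow i) + wt (grow j))%N.
  rewrite !wt_grow expnS -weight_submask2 -!weight_submask -weight_addb.
  by congr (_ + _)%N; apply: wt_natr => c; rewrite mxE !grow_entry natr_addb_F2.
split=> // a; rewrite sum_scale_pair (wt_natr (@sum_scale_grow_entry _ _)).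
set K := coef_support _.
have KE k : (k <= j)%N -> K k = (k == i) || (k == j) by exact: coef_support_coset.
have K_min k : (k < j)%N -> k != i -> ~~ K k.
  by move=> lt_kj ne_ki; rewrite KE ?(ltnW lt_kj) // (negbTE ne_ki) ltn_eqF.
have := weight_encode_pair_ge hij (ltn_ord j) _ _ K_min.
rewrite KE ?(ltnW hij) ?eqxx // KE ?eqxx ?orbT // -!wt_grow; lia.
Qed.
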